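(* Let $(X,d)$ be a finite ultrametric space with $|X|\geqslant 2$. If $(X,d)\in\mathfrak U$, then the diametral graph $G_d$ of $(X,d)$ is a complete bipartite graph.
   Context: For a metric space $(X,d)$, its spectrum is $\operatorname{Sp}(X)=\{d(x,y): x,y\in X,\ x\neq y\}$ and $\operatorname{diam}X=\sup\{d(x,y):x,y\in X\}$. $\mathfrak U$ denotes the class of finite ultrametric spaces $X$ with $|\operatorname{Sp}(X)|=|X|-1$. The diametral graph $G_d$ of $(X,d)$ is the graph with vertex set $X$ in which $\{u,v\}$ is an edge iff $d(u,v)=\operatorname{diam}X$. Graphs are simple undirected graphs $(V,E)$ with $V\neq\varnothing$. A nonempty graph $G$ is complete $k$-partite, written $G=G[X_1,\dots,X_k]$, if its vertex set is partitioned into $k$ disjoint nonempty sets $X_1,\dots,X_k$ such that no edge joins two vertices of the same $X_i$ and any two vertices from different parts are adjacent; complete bipartite means $k=2$. *)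

From mathcomp Require Import all_boot all_order all_algebra.
From mathcomp Require Import reals.
Set Implicit Arguments. Unset Strict Implicit. Unset Printing Implicit Defensive.
Import Order.TTheory GRing.Theory Num.Theory.
Local Open Scope ring_scope.

Definition is_ultrametric (R : realType) (X : finType) (d : X -> X -> R) : Prop :=
  [/\ (forall x y, 0 <= d x y),
      (forall x y, d x y = 0 <-> x = y),
      (forall x y, d x y = d y x) &
      (forall x y z, d x y <= Num.max (d x z) (d z y))].

Definition spectrum (R : realType) (X : finType) (d : X -> X -> R) : seq R :=
  undup [seq d p.1 p.2 | p <- enum [pred p : X * X | p.1 != p.2]].

(* diam X = sup { d(x,y) } (a max, X finite; distances are >= 0). *)
Definition diam (R : realType) (X : finType) (d : X -> X -> R) : R :=
  \big[Num.max/0]_(p : X * X) d p.1 p.2.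

Definition in_classU (R : realType) (X : finType) (d : X -> X -> R) : Prop :=
  is_ultrametric d /\ size (spectrum d) = (#|X| - 1)%N.

Definition diametral_edge (R : realType) (X : finType) (d : X -> X -> R) : rel X :=
  fun u v => d u v == diam d.

Definition complete_bipartite (T : finType) (e : rel T) : Prop :=
  exists A B : {set T},
    [/\ A != set0, B != set0, [disjoint A & B], A :|: B = [set: T] &
        forall u v, e u v <-> ((u \in A) && (v \in B)) || ((u \in B) && (v \in A))].

(* Write D = diam X.  Deleting a point x from a finite ultrametric space S adds
   at most one new distance to the spectrum: every d(x,z) either equals d(x,y)
   for a nearest neighbour y of x, or equals d(y,z) by the isosceles property.
   Hence |Sp(S)| <= |Sp(T)| + |S \ T| for every nonempty T within S.  For X in
   U this forbids a triangle with three sides D (it would give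
   |Sp(X)| <= 1 + (|X| - 3)).  Fixing a point a, the ultrametric inequality
   then shows that d(u,v) = D exactly when one of d(a,u), d(a,v) is D, so the
   sets {v | d(a,v) = D} and its complement are the two parts. *)
From mathcomp Require Import all_boot all_order all_algebra.
From mathcomp Require Import reals.
From mathcomp Require Import zify.
Set Implicit Arguments. Unset Strict Implicit. Unset Printing Implicit Defensive.
Import Order.TTheory GRing.Theory Num.Theory.
Local Open Scope ring_scope.

Section Distances.
Variables (R : realType) (X : finType) (d : X -> X -> R).

Definition spectrum_in (S : {set X}) : seq R :=
  undup [seq d p.1 p.2 |
         p <- enum [pred p : X * X | [&& p.1 \in S, p.2 \in S & p.1 != p.2]]].

Lemma spectrum_inP (S : {set X}) r :
  reflect (exists x y, [/\ x \in S, y \in S, x != y & r = d x y])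
          (r \in spectrum_in S).
Proof.
rewrite mem_undup; apply: (iffP mapP).
  by move=> [[x y]]; rewrite mem_enum => /and3P[? ? ?] ->; exists x, y.
by move=> [x [y [? ? ? ->]]]; exists (x, y); rewrite // mem_enum; apply/and3P.
Qed.

Lemma spectrum_in_setT : spectrum_in [set: X] = spectrum d.
Proof. by congr (undup (map _ _)); apply: eq_enum => p; rewrite !inE. Qed.

Lemma le_diam x y : d x y <= diam d.
Proof. by rewrite /diam (bigD1 (x, y)) //= le_max lexx. Qed.

End Distances.

Section Ultrametric.
Variables (R : realType) (X : finType) (d : X -> X -> R).
Hypothesis d_ultra : is_ultrametric d.

Lemma ultra_ge0 x y : 0 <= d x y. Proof. by case: d_ultra. Qed.
Lemma ultra_eq0 x y : (d x y = 0) <-> x = y. Proof. by case: d_ultra. Qed.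
Lemma ultra_sym x y : d x y = d y x. Proof. by case: d_ultra. Qed.
Lemma ultra_le_max x y z : d x y <= Num.max (d x z) (d z y).
Proof. by case: d_ultra. Qed.

Lemma ultra_xx x : d x x = 0. Proof. exact/ultra_eq0. Qed.

Lemma ultra_gt0 (x y : X) : x != y -> 0 < d x y.
Proof.
by move=> xy; rewrite lt_def ultra_ge0 andbT; apply: contra xy => /eqP/ultra_eq0->.
Qed.

Lemma ultra_isosceles x y z : d x z < d x y -> d z y = d x y.
Proof.
move=> lt_xz_xy; apply/le_anti/andP; split.
  apply: le_trans (ultra_le_max z y x) _.
  by rewrite [d z x]ultra_sym ge_max lexx (ltW lt_xz_xy).
by move: (ultra_le_max x y z); rewrite le_max leNgt lt_xz_xy.
Qed.

Lemma diam_gt0 (x y : X) : x != y -> 0 < diam d.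
Proof. by move=> xy; exact: lt_le_trans (ultra_gt0 xy) (le_diam d x y). Qed.

Lemma diam_attained (x0 : X) : exists x y, d x y = diam d.
Proof.
rewrite /diam; apply: (big_ind (fun r => exists x y, d x y = r)).
- by exists x0, x0; rewrite ultra_xx.
- by move=> r s hr hs; rewrite maxElt; case: ifP.
- by move=> p _; exists p.1, p.2.
Qed.

Lemma size_spectrum_inD1 (S : {set X}) x : x \in S -> S :\ x != set0 ->
  (size (spectrum_in d S) <= (size (spectrum_in d (S :\ x))).+1)%N.
Proof.
move=> xS /set0Pn[t tSx].
case: (arg_minP (fun y => d x y) tSx) => y ySx y_nearest.
have /setD1P[yx yS] : y \in S :\ x := ySx.
have from_x z : z \in S -> z != x ->
    (d x z == d x y) || (d x z \in spectrum_in d (S :\ x)).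
  move=> zS zx; have zSx : z \in S :\ x by rewrite !inE zx.
  have := y_nearest z zSx; rewrite le_eqVlt eq_sym => /orP[->//|lt_xy_xz].
  apply/orP; right; apply/spectrum_inP; exists y, z; split => //.
    by apply: contraTneq lt_xy_xz => ->; rewrite ltxx.
  by rewrite -(ultra_isosceles lt_xy_xz) ultra_sym.
rewrite -[(size _).+1]/(size (d x y :: _)); apply: uniq_leq_size; first exact: undup_uniq.
move=> r /spectrum_inP[a [b [aS bS ab ->]]]; rewrite inE.
have [eax | ax] := eqVneq a x.
  by subst a; apply: from_x => //; rewrite eq_sym.
have [ebx | bx] := eqVneq b x; first by subst b; rewrite ultra_sym; apply: from_x.
by apply/orP; right; apply/spectrum_inP; exists a, b; rewrite !inE ax bx.
Qed.

Lemma size_spectrum_in_subset (S T : {set X}) : T \subset S -> T != set0 ->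
  (size (spectrum_in d S) <= size (spectrum_in d T) + #|S :\: T|)%N.
Proof.
move=> TS T0; move nST: #|S :\: T| => n; elim: n S TS nST => [|n IHn] S TS nST.
  suff -> : S = T by rewrite addn0.
  by apply/eqP; rewrite eqEsubset TS -setD_eq0 -cards_eq0 nST.
have [x] : exists x, x \in S :\: T by apply/card_gt0P; rewrite nST.
rewrite inE => /andP[xT xS].
have TSx : T \subset S :\ x.
  by apply/subsetP => z zT; rewrite !inE (subsetP TS) // andbT; apply: contraNneq xT => <-.
have nSxT : #|(S :\ x) :\: T| = n.
  by apply/succn_inj; rewrite setDDl setUC -setDDl -nST (cardsD1 x (S :\: T)) !inE xT xS.
have Sx0 : S :\ x != set0 by apply: contraNneq T0 => Sx; rewrite -subset0 -Sx.
by rewrite addnS (leq_trans (size_spectrum_inD1 xS Sx0)) // ltnS IHn.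
Qed.

End Ultrametric.

Section ClassU.
Variables (R : realType) (X : finType) (d : X -> X -> R).
Hypothesis dU : in_classU d.

Let d_ultra : is_ultrametric d := dU.1.

Lemma classU_equilateral_eq0 a u v r :
  d a u = r -> d a v = r -> d u v = r -> r = 0.
Proof.
move=> dau dav duv; have [// | r_neq0] := eqVneq r 0; exfalso.
have neq p q : d p q = r -> p != q.
  by move=> dpq; apply: contra r_neq0 => /eqP pq; rewrite -dpq pq (ultra_xx d_ultra).
set T := [set a; u; v].
have cardT : #|T| = 3%N.
  rewrite [T]setUC cardsU1 cards2 !inE ![v == _]eq_sym.
  by rewrite (negbTE (neq _ _ dav)) (negbTE (neq _ _ duv)) neq.
have spT : (size (spectrum_in d T) <= 1)%N.
  rewrite -[1%N]/(size [:: r]); apply: uniq_leq_size; first exact: undup_uniq.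
  move=> z /spectrum_inP[x [y [+ + xy ->]]]; rewrite !inE.
  move: xy => /[swap] /orP[/orP[]|]/eqP-> /[swap] /orP[/orP[]|]/eqP->;
    rewrite ?eqxx // => _;
    by rewrite ?dau ?dav ?duv ?eqxx // (ultra_sym d_ultra) ?dau ?dav ?duv ?eqxx.
have T0 : T != set0 by apply/set0Pn; exists a; rewrite !inE eqxx.
have := size_spectrum_in_subset d_ultra (subsetT T) T0.
rewrite setTD spectrum_in_setT dU.2.
have := cardsC T; have := max_card (mem T); rewrite cardT; lia.
Qed.

Lemma classU_diametral_xor a u v : 0 < diam d ->
  (d u v == diam d) = (d a u == diam d) (+) (d a v == diam d).
Proof.
move=> D_gt0.
have ltD_neqD x y : (d x y < diam d) = (d x y != diam d).
  by rewrite lt_neqAle le_diam andbT.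
have [au | au] := eqVneq (d a u) (diam d); have [av | av] := eqVneq (d a v) (diam d).
- apply/negbTE/eqP => uv; move: D_gt0; rewrite (classU_equilateral_eq0 au av uv).
  by rewrite ltxx.
- apply/eqP; rewrite (ultra_sym d_ultra u v) -au.
  by apply: (ultra_isosceles d_ultra); rewrite au ltD_neqD.
- apply/eqP; rewrite -av.
  by apply: (ultra_isosceles d_ultra); rewrite av ltD_neqD.
- apply/negbTE; rewrite -ltD_neqD (le_lt_trans (ultra_le_max d_ultra u v a)) //.
  by rewrite gt_max (ultra_sym d_ultra u a) !ltD_neqD au av.
Qed.

End ClassU.

Theorem corollary5 (R : realType) (X : finType) (d : X -> X -> R) :
  (2 <= #|X|)%N -> in_classU d -> complete_bipartite (diametral_edge d).
Proof.
move=> /card_gt1P[x [y [_ _ xy]]] dU.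
have d_ultra : is_ultrametric d := dU.1.
have D_gt0 : 0 < diam d := diam_gt0 d_ultra xy.
have [a [q daq]] := diam_attained d_ultra x.
pose B := [set v | d a v == diam d].
exists B, (~: B); split.
- by apply/set0Pn; exists q; rewrite inE daq eqxx.
- by apply/set0Pn; exists a; rewrite !inE (ultra_xx d_ultra) (lt_eqF D_gt0).
- by rewrite -subsets_disjoint.
- exact: setUCr.
move=> u v; rewrite /diametral_edge !inE (classU_diametral_xor dU a) //.
by case: (_ == _); case: (_ == _).
Qed.
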